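(* Let $X$ be a $T_1$ topological space. (i) For every $\alpha\in X$, the maximal ideal $M_\alpha=\{f\in C_c(X)_F: f(\alpha)=0\}$ is generated by the idempotent $1-\chi_{\{\alpha\}}$. (ii) Every prime ideal of $C_c(X)_F$ which is not maximal is an essential ideal.
   Context: $C_c(X)_F$ denotes the set of all functions $f:X\to\mathbb{R}$ whose range is countable and whose set of points of discontinuity is finite; it is a commutative ring with unity under pointwise operations. $\chi_{\{\alpha\}}$ is the function equal to $1$ at $\alpha$ and $0$ elsewhere. An ideal is essential if it meets every nonzero ideal nontrivially. *)

From HB Require Import structures.
From mathcomp Require Import all_boot all_order all_algebra.
From mathcomp Require Import all_classical all_reals all_analysis.
Set Implicit Arguments. Unset Strict Implicit. Unset Printing Implicit Defensive.
Import Order.TTheory GRing.Theory Num.Theory.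
Import numFieldNormedType.Exports.
Local Open Scope classical_set_scope.
Local Open Scope ring_scope.

Section CcF.
Variables (X : topologicalType) (R : realType).

Definition CcF : set (X -> R) :=
  [set f | countable (range f) /\ finite_set [set x | ~ {for x, continuous f}]].

Definition fzero : X -> R := fun _ => 0.
Definition fone : X -> R := fun _ => 1.
Definition fadd (f g : X -> R) : X -> R := fun x => f x + g x.
Definition fopp (f : X -> R) : X -> R := fun x => - f x.
Definition fmul (f g : X -> R) : X -> R := fun x => f x * g x.

Definition chi1 (a : X) : X -> R := fun x => if pselect (x = a) then 1 else 0.

Definition is_ideal (I : set (X -> R)) : Prop :=
  [/\ I `<=` CcF, I fzero,
      (forall f g, I f -> I g -> I (fadd f g)) &
      (forall f g, CcF f -> I g -> I (fmul f g))].

Definition is_proper_ideal (I : set (X -> R)) : Prop :=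
  is_ideal I /\ I != CcF.

Definition is_maximal_ideal (I : set (X -> R)) : Prop :=
  is_proper_ideal I /\
  forall J, is_ideal J -> I `<=` J -> J = I \/ J = CcF.

Definition is_prime_ideal (I : set (X -> R)) : Prop :=
  is_proper_ideal I /\
  forall f g, CcF f -> CcF g -> I (fmul f g) -> I f \/ I g.

(* the ideal generated by e (ring with unity: the multiples of e) *)
Definition principal_ideal (e : X -> R) : set (X -> R) :=
  [set h | exists2 g, CcF g & h = fmul g e].

Definition is_essential_ideal (I : set (X -> R)) : Prop :=
  is_ideal I /\
  forall J, is_ideal J -> J != [set fzero] ->
    exists f, [/\ I f, J f & f <> fzero].

Definition M_ (a : X) : set (X -> R) := [set f | CcF f /\ f a = 0].

End CcF.

(** In a T1 space the point indicator chi_{a} is locally constant off [a],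
    so it lies in C_c(X)_F, and so does its complementary idempotent
    e = 1 - chi_{a}; a function vanishes at [a] iff it equals f * e.  Since
    chi_{a} * e = 0, a prime ideal contains chi_{a} or e, and in the latter
    case it contains M_a and hence equals it.  So a non-maximal prime ideal
    contains every chi_{a}: a nonzero ideal J contains some f with f a <> 0,
    and chi_{a} * f is then a nonzero element of P meeting J. *)
From HB Require Import structures.
From mathcomp Require Import all_boot all_order all_algebra.
From mathcomp Require Import all_classical all_reals all_analysis.
Import Order.TTheory GRing.Theory Num.Theory.
Import numFieldNormedType.Exports.
Local Open Scope classical_set_scope.
Local Open Scope ring_scope.

Section CcF_ring.
Variables (X : topologicalType) (R : realType).
Local Notation CcF := (@CcF X R).
Local Notation fzero := (@fzero X R).
Local Notation fone := (@fone X R).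
Local Notation fadd := (@fadd X R).
Local Notation fopp := (@fopp X R).
Local Notation fmul := (@fmul X R).
Local Notation chi1 := (@chi1 X R).
Local Notation M_ := (@M_ X R).
Local Notation is_ideal := (@is_ideal X R).
Local Notation is_maximal_ideal := (@is_maximal_ideal X R).
Local Notation is_prime_ideal := (@is_prime_ideal X R).
Local Notation is_essential_ideal := (@is_essential_ideal X R).
Local Notation principal_ideal := (@principal_ideal X R).

Definition co_chi1 (a : X) : X -> R := fadd fone (fopp (chi1 a)).

Lemma countable_range_op2 (f g : X -> R) (op : R -> R -> R) :
  countable (range f) -> countable (range g) ->
  countable (range (fun x => op (f x) (g x))).
Proof.
move=> cf cg; apply: (sub_countable _ (countableX cf cg)).
apply: card_le_trans (card_image_le (fun p => op p.1 p.2) _).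
apply: subset_card_le => _ [x _ <-].
by exists (f x, g x) => //; split; exists x.
Qed.

Lemma finite_discontinuities_op2 (f g h : X -> R) :
  (forall x, {for x, continuous f} -> {for x, continuous g} ->
     {for x, continuous h}) ->
  finite_set [set x | ~ {for x, continuous f}] ->
  finite_set [set x | ~ {for x, continuous g}] ->
  finite_set [set x | ~ {for x, continuous h}].
Proof.
move=> fg_h ff fg.
apply: (sub_finite_set (B := [set x | ~ {for x, continuous f}]
                            `|` [set x | ~ {for x, continuous g}])).
  move=> x /= nh; apply: contrapT => /not_orP [/contrapT cf /contrapT cg].
  exact/nh/fg_h.
by rewrite finite_setU.
Qed.

Lemma CcF_cst (c : R) : CcF (fun _ => c).
Proof.
split.
  apply: finite_set_countable; apply: (sub_finite_set (B := [set c])) => //.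
  by move=> _ [x _ <-].
apply: (sub_finite_set (B := set0)) => // x /= ncont; apply: ncont; exact: cvg_cst.
Qed.

Lemma CcF_add f g : CcF f -> CcF g -> CcF (fadd f g).
Proof.
move=> [cf df] [cg dg]; split; first exact: countable_range_op2.
by apply: finite_discontinuities_op2 df dg => x; apply: cvgD.
Qed.

Lemma CcF_mul f g : CcF f -> CcF g -> CcF (fmul f g).
Proof.
move=> [cf df] [cg dg]; split; first exact: countable_range_op2.
by apply: finite_discontinuities_op2 df dg => x; apply: cvgM.
Qed.

Lemma CcF_opp f : CcF f -> CcF (fopp f).
Proof.
move=> Cf; have -> : fopp f = fmul (fun _ => -1) f.
  by apply/funext => x; rewrite /fopp /fmul mulN1r.
exact/CcF_mul/Cf/CcF_cst.
Qed.

Lemma fmulC f g : fmul f g = fmul g f.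
Proof. by apply/funext => x; rewrite /fmul mulrC. Qed.

Lemma co_chi1_idem a : fmul (co_chi1 a) (co_chi1 a) = co_chi1 a.
Proof.
apply/funext => x; rewrite /co_chi1 /fmul /fadd /fone /fopp /chi1.
by case: pselect => h; rewrite ?subrr ?mulr0 ?subr0 ?mulr1.
Qed.

Lemma chi1_mul_co_chi1 a : fmul (chi1 a) (co_chi1 a) = fzero.
Proof.
apply/funext => x; rewrite /co_chi1 /fmul /fadd /fone /fopp /chi1 /fzero.
by case: pselect => h; rewrite ?subrr ?mulr0 ?mul0r.
Qed.

Lemma is_ideal_M a : is_ideal (M_ a).
Proof.
split.
- by move=> f [].
- by split; [exact: CcF_cst|].
- move=> f g [Cf fa] [Cg ga].
  by split; [exact: CcF_add | rewrite /fadd fa ga addr0].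
- by move=> f g Cf [Cg ga]; split; [exact: CcF_mul | rewrite /fmul ga mulr0].
Qed.

Lemma is_maximal_ideal_M a : is_maximal_ideal (M_ a).
Proof.
split.
  split; first exact: is_ideal_M.
  apply/eqP => MC; have [_ /eqP] : M_ a fone by rewrite MC; exact: CcF_cst.
  by rewrite /fone oner_eq0.
move=> J [JC _ Jadd Jmul] MJ.
have [[g [Jg ga]]|J_M] := pselect (exists g, J g /\ g a <> 0); last first.
  left; apply/seteqP; split => // g Jg; split; first exact: JC.
  by apply: contrapT => ga; apply: J_M; exists g.
right; apply/seteqP; split => // h Ch.
pose c : X -> R := fun _ => h a / g a.
(* [h - c g] vanishes at [a], so lies in [M_ a], hence in [J]. *)
have -> : h = fadd (fadd h (fopp (fmul c g))) (fmul c g).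
  by apply/funext => x; rewrite /fadd /fopp subrK.
apply: Jadd; last exact: Jmul (CcF_cst _) Jg.
apply: MJ; split.
  by apply/CcF_add/CcF_opp/CcF_mul/JC => //; exact: CcF_cst.
by rewrite /fadd /fopp /fmul /c divfK ?subrr //; apply/eqP.
Qed.

Lemma principal_ideal_sub I e : is_ideal I -> I e -> principal_ideal e `<=` I.
Proof. by move=> [_ _ _ Imul] Ie _ [g Cg ->]; apply: Imul. Qed.

Lemma is_essential_ideal_chi1 I :
  is_ideal I -> (forall a, I (chi1 a)) -> is_essential_ideal I.
Proof.
move=> Iid Ichi; split => // J [JC J0 _ Jmul] Jnz.
have [f [Jf fnz]] : exists f, J f /\ f <> fzero.
  apply: contrapT => nex; move/eqP: Jnz; apply; apply/seteqP.
  split=> [f Jf|_ -> //]; apply: contrapT => fz; apply: nex; by exists f.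
have [a fa] : exists a, f a <> 0.
  apply: contrapT => nex; apply/fnz/funext => x.
  by apply: contrapT => fx; apply: nex; exists x.
exists (fmul (chi1 a) f); split.
- by rewrite fmulC; case: Iid => _ _ _ Imul; apply: Imul (JC _ Jf) (Ichi a).
- by apply: Jmul Jf; case: Iid => IC _ _ _; apply: IC.
- move=> /(congr1 (fun h => h a)); rewrite /fmul /fzero /chi1.
  by case: pselect => // h; rewrite mul1r.
Qed.

Hypothesis hT1 : accessible_space X.

Lemma CcF_chi1 a : CcF (chi1 a).
Proof.
split.
  apply: finite_set_countable; apply: (sub_finite_set (B := [set 0; 1])).
    by move=> _ [x _ <-]; rewrite /chi1; case: pselect; [right|left].
  by rewrite finite_setU; split; apply: finite_set1.
apply: (sub_finite_set (B := [set a])); last exact: finite_set1.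
move=> x /= ncont; apply: contrapT => xa; apply: ncont.
(* [chi1 a] is constant on the open neighbourhood [~` [set a]] of [x]. *)
have nx : nbhs x (~` [set a]).
  apply: open_nbhs_nbhs; split => //.
  exact: closed_openC (@accessible_closed_set1 _ hT1 a).
apply: cvg_trans (near_eq_cvg _) (cvg_cst (chi1 a x)).
near=> y; have : (~` [set a]) y by near: y.
by rewrite /chi1; case: pselect => //; case: pselect.
Unshelve. all: by end_near.
Qed.

Lemma CcF_co_chi1 a : CcF (co_chi1 a).
Proof. exact/CcF_add/CcF_opp/CcF_chi1/CcF_cst. Qed.

Lemma M_principal_co_chi1 a : M_ a = principal_ideal (co_chi1 a).
Proof.
apply/seteqP; split.
  move=> f [Cf fa]; exists f => //.
  apply/funext => x; rewrite /co_chi1 /fmul /fadd /fone /fopp /chi1.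
  by case: pselect => xa; [rewrite subrr mulr0 xa fa | rewrite subr0 mulr1].
move=> _ [g Cg ->]; split; first exact/CcF_mul/CcF_co_chi1.
by rewrite /co_chi1 /fmul /fadd /fone /fopp /chi1; case: pselect => // aa;
  rewrite subrr mulr0.
Qed.

Lemma prime_ideal_chi1_or_M P a :
  is_prime_ideal P -> P (chi1 a) \/ P = M_ a.
Proof.
move=> [[Pid PC] Pprime].
have : P (fmul (chi1 a) (co_chi1 a)) by rewrite chi1_mul_co_chi1; case: Pid.
case/(Pprime _ _ (CcF_chi1 a) (CcF_co_chi1 a)) => [|Pe]; first by left.
have MP : M_ a `<=` P by rewrite M_principal_co_chi1; exact: principal_ideal_sub.
have [_ Mmax] := is_maximal_ideal_M a.
by case: (Mmax P Pid MP); [right | move=> P_CcF; rewrite P_CcF eqxx in PC].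
Qed.

End CcF_ring.

Theorem proposition3p18 (X : topologicalType) (R : realType)
  (hT1 : accessible_space X) :
  (forall a : X,
     let e := fadd (@fone X R) (fopp (@chi1 X R a)) in
     [/\ is_maximal_ideal (@M_ X R a), CcF e, fmul e e = e &
         @M_ X R a = principal_ideal e]) /\
  (forall P : set (X -> R),
     is_prime_ideal P -> ~ is_maximal_ideal P -> is_essential_ideal P).
Proof.
split=> [a e | P Pprime Pnmax].
  split; [exact: is_maximal_ideal_M | exact: CcF_co_chi1 |
          exact: co_chi1_idem | exact: M_principal_co_chi1].
apply: is_essential_ideal_chi1; first by case: Pprime => [[]].
move=> a; case: (@prime_ideal_chi1_or_M X R hT1 P a Pprime) => // PM.
by case: Pnmax; rewrite PM; apply: is_maximal_ideal_M.
Qed.
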